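(* Let $\mathsf K$ be a class of $\tau$-algebras. The following are equivalent: (1) $\mathsf K$ is a variety; (2) $\mathsf K=\mathrm{Mod}(\mathrm{Th}(\mathsf K))$; (3) $\mathsf K=(\mathsf K^{\triangle})^{\nabla}$ and $\mathsf K^{\triangle}$ is a variety of infinitary clone $\tau$-algebras.
   Context: Fix a set $\tau$ of operation symbols, each of arity $\omega$, disjoint from $\{q\}\cup\{e_i:i\in\omega\}$. A $\tau$-algebra is $\mathbf A=(A,f^{\mathbf A})_{f\in\tau}$ with each $f^{\mathbf A}:A^\omega\to A$. Let $V=\{e_0,e_1,\dots\}$ be a countable set of variables; $\tau$-terms over $V$ are the elements of the smallest set containing $V$ and containing $f(t_0,t_1,\dots)$ whenever $f\in\tau$ and $t_0,t_1,\dots$ are terms (well-founded, countably branching terms). For a term $t$ the term operation $t^{\mathbf A}:A^\omega\to A$ is given by $e_i^{\mathbf A}(s)=s_i$ and $f(t_0,t_1,\dots)^{\mathbf A}(s)=f^{\mathbf A}(t_0^{\mathbf A}(s),t_1^{\mathbf A}(s),\dots)$. An identity is a pair $t=u$ of terms; $\mathbf A$ satisfies it if $t^{\mathbf A}=u^{\mathbf A}$. $\mathrm{Th}(\mathbf A)$ is the set of identities satisfied by $\mathbf A$, $\mathrm{Th}(\mathsf K)=\bigcap_{\mathbf A\in\mathsf K}\mathrm{Th}(\mathbf A)$, and $\mathrm{Mod}(\Sigma)$ is the class of $\tau$-algebras satisfying every identity of $\Sigma$. A variety is a class closed under isomorphic copies, homomorphic images, subalgebras and arbitrary direct products. Let $\bar\tau$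 be the type with nullary symbols $e_i$ ($i\in\omega$), a nullary symbol $f$ for each $f\in\tau$, and one $\omega$-ary symbol $q$. An infinitary clone $\tau$-algebra is a $\bar\tau$-algebra $\mathcal C=(C,q^{\mathcal C},e_i^{\mathcal C},f^{\mathcal C})$ satisfying, for all elements: (N1) $q(e_i,x_0,x_1,\dots)=x_i$; (N2) $q(x,e_0,e_1,\dots)=x$; (N3) $q(q(x,y_0,y_1,\dots),\boldsymbol z)=q(x,q(y_0,\boldsymbol z),q(y_1,\boldsymbol z),\dots)$ where $\boldsymbol z=(z_0,z_1,\dots)$. Homomorphisms, subalgebras, products and varieties of these are those of $\bar\tau$-algebras. For a $\tau$-algebra $\mathbf A$, $\mathcal O^{(\omega)}_{\mathbf A}$ is the infinitary clone $\tau$-algebra whose universe is the set of all functions $A^\omega\to A$, with $e_i(s)=s_i$, $q(g_0,g_1,\dots)(s)=g_0(g_1(s),g_2(s),\dots)$, and the constant $f$ interpreted as $f^{\mathbf A}$. Its subalgebras are the functional infinitary clone $\tau$-algebras with value domain $\mathbf A$; their class is $\mathsf{FCA}(\mathbf A)$. For a class $\mathsf K$ of $\tau$-algebras, $\mathsf K^{\triangle}$ is the class of infinitary clone $\tau$-algebras isomorphic to a subalgebra of $\mathcal O^{(\omega)}_{\mathbf A}$ for some $\mathbf A\in\mathsf K$. For a class $\mathsf H$ of infinitary clone $\tau$-algebras, $\mathsf H^{\nabla}$ is the class of $\tau$-algebras isomorphic to some $\mathbf A$ with $\mathsf{FCA}(\mathbf A)\cap\mathsf H\neq\emptyset$. 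*)

Record signature := Signature { op_sym : Type; arity : op_sym -> Type }.

Record algebra (S : signature) := Algebra {
  carrier :> Type;
  interp : forall o : op_sym S, (arity S o -> carrier) -> carrier }.
Arguments Algebra {S} carrier interp.
Arguments carrier {S} _.
Arguments interp {S} _ o _.

Definition is_hom {S : signature} (A B : algebra S) (h : A -> B) : Prop :=
  forall (o : op_sym S) (s : arity S o -> A),
    h (interp A o s) = interp B o (fun i => h (s i)).

Definition isomorphic {S : signature} (A B : algebra S) : Prop :=
  exists (h : A -> B) (g : B -> A),
    is_hom A B h /\ (forall x, g (h x) = x) /\ (forall y, h (g y) = y).

Definition closed_subset {S : signature} (A : algebra S) (P : A -> Prop) : Prop :=
  forall (o : op_sym S) (s : arity S o -> A), (forall i, P (s i)) -> P (interp A o s).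

Definition subalgebra {S : signature} (A : algebra S) (P : A -> Prop)
  (HP : closed_subset A P) : algebra S :=
  Algebra {x : carrier A | P x}
    (fun o s => exist P (interp A o (fun i => proj1_sig (s i)))
                        (HP o _ (fun i => proj2_sig (s i)))).

Definition product {S : signature} (I : Type) (F : I -> algebra S) : algebra S :=
  Algebra (forall i : I, carrier (F i))
    (fun o s => fun i => interp (F i) o (fun a => s a i)).

Definition same_class {S : signature} (K L : algebra S -> Prop) : Prop :=
  forall A, K A <-> L A.

Definition variety {S : signature} (K : algebra S -> Prop) : Prop :=
  (forall A B : algebra S, K A -> isomorphic A B -> K B) /\
  (forall (A B : algebra S) (h : A -> B), K A -> is_hom A B h ->
      (forall y, exists x, h x = y) -> K B) /\
  (forall (A : algebra S) (P : A -> Prop) (HP : closed_subset A P), K A -> K (subalgebra A P HP)) /\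
  (forall (I : Type) (F : I -> algebra S), (forall i, K (F i)) -> K (product I F)).

Definition tau_sig (sym : Type) : signature := Signature sym (fun _ => nat).
Definition talg (sym : Type) := algebra (tau_sig sym).

Inductive term (sym : Type) : Type :=
| Var : nat -> term sym
| App : sym -> (nat -> term sym) -> term sym.
Arguments Var {sym} _.
Arguments App {sym} _ _.

Fixpoint term_op {sym : Type} (A : talg sym) (t : term sym) (s : nat -> A) : A :=
  match t with
  | Var i => s i
  | App f ts => interp A f (fun n => term_op A (ts n) s)
  end.

(* an identity t = u is a pair of terms; A satisfies it iff t^A = u^A *)
Definition satisfies {sym : Type} (A : talg sym) (t u : term sym) : Prop :=
  forall s : nat -> A, term_op A t s = term_op A u s.

Definition Th {sym : Type} (K : talg sym -> Prop) : term sym -> term sym -> Prop :=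
  fun t u => forall A, K A -> satisfies A t u.

Definition Mod {sym : Type} (Sigma : term sym -> term sym -> Prop) : talg sym -> Prop :=
  fun A => forall t u, Sigma t u -> satisfies A t u.

Inductive clone_sym (sym : Type) : Type :=
| Oq : clone_sym sym
| Oe : nat -> clone_sym sym
| Of : sym -> clone_sym sym.
Arguments Oq {sym}.
Arguments Oe {sym} _.
Arguments Of {sym} _.

Definition clone_arity {sym : Type} (o : clone_sym sym) : Type :=
  match o with Oq => nat | _ => Empty_set end.

Definition clone_sig (sym : Type) : signature := Signature (clone_sym sym) clone_arity.
Definition calg (sym : Type) := algebra (clone_sig sym).

(* argument list (x, y_0, y_1, ...) of q : index 0 is x, index i+1 is y_i *)
Definition scons {X : Type} (x : X) (ys : nat -> X) : nat -> X :=
  fun n => match n with 0 => x | S k => ys k end.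

Definition cq {sym : Type} (C : calg sym) (x : C) (ys : nat -> C) : C :=
  interp C (Oq : op_sym (clone_sig sym)) (scons x ys).
Definition ce {sym : Type} (C : calg sym) (i : nat) : C :=
  interp C (Oe i : op_sym (clone_sig sym)) (fun v : Empty_set => match v with end).
Definition cf {sym : Type} (C : calg sym) (f : sym) : C :=
  interp C (Of f : op_sym (clone_sig sym)) (fun v : Empty_set => match v with end).

Definition is_clone_alg {sym : Type} (C : calg sym) : Prop :=
  (forall (i : nat) (xs : nat -> C), cq C (ce C i) xs = xs i) /\
  (forall x : C, cq C x (ce C) = x) /\
  (forall (x : C) (ys zs : nat -> C),
      cq C (cq C x ys) zs = cq C x (fun i => cq C (ys i) zs)).

Definition clone_variety {sym : Type} (H : calg sym -> Prop) : Prop :=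
  variety H /\ (forall C, H C -> is_clone_alg C).

Definition O_interp {sym : Type} (A : talg sym) (o : clone_sym sym) :
  (clone_arity o -> ((nat -> A) -> A)) -> ((nat -> A) -> A) :=
  match o as o0 return (clone_arity o0 -> ((nat -> A) -> A)) -> ((nat -> A) -> A) with
  | Oq => fun g s => g 0 (fun i => g (S i) s)
  | Oe i => fun _ s => s i
  | Of f => fun _ s => interp A (f : op_sym (tau_sig sym)) s
  end.

Definition O_omega {sym : Type} (A : talg sym) : calg sym :=
  @Algebra (clone_sig sym) ((nat -> carrier A) -> carrier A) (O_interp A).

Definition triangle {sym : Type} (K : talg sym -> Prop) : calg sym -> Prop :=
  fun C => is_clone_alg C /\
    exists (A : talg sym) (P : O_omega A -> Prop) (HP : closed_subset (O_omega A) P),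
      K A /\ isomorphic C (subalgebra (O_omega A) P HP).

(* H^nabla : FCA(A) meets H, FCA(A) being the subalgebras of O^(omega)_A *)
Definition nabla {sym : Type} (H : calg sym -> Prop) : talg sym -> Prop :=
  fun B => exists A : talg sym, isomorphic B A /\
    exists (P : O_omega A -> Prop) (HP : closed_subset (O_omega A) P),
      H (subalgebra (O_omega A) P HP).

(* Birkhoff's argument survives countably infinitary operations.  Mod Sigma is
   closed under H, S and P.  A model A of Th K is covered, one sequence s of
   elements at a time, by a homomorphic image of the K-free algebra on omega
   generators (a subalgebra of a product of counterexamples to the non-identities);
   since every operation only looks at countably many arguments, these covers glue
   into a homomorphic image of a subalgebra of their product: keep the elements of
   the product that are eventually constant along the countable subsets of A.

   Every clone algebra embeds into O^(omega) of its tau-reduct by a |-> q(a, -), and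
   the tau-reduct of a subalgebra of O^(omega)_A is a subalgebra of the power
   A^(A^omega).  So K^triangle consists of the clone algebras whose tau-reduct lies
   in K; for a variety K this is a clone variety and, by the same gluing argument,
   (K^triangle)^nabla = K.  Conversely B lies in H^nabla iff some member of H maps
   homomorphically into O^(omega)_B, a condition preserved by H, S and P. *)

From Stdlib Require Import FunctionalExtensionality ClassicalEpsilon FinFun Cantor.

Lemma proj1_sig_inj {T : Type} (P : T -> Prop) (x y : sig P) :
  proj1_sig x = proj1_sig y -> x = y.
Proof.
  destruct x as [x px], y as [y py]; simpl; intros ->.
  f_equal; apply proof_irrelevance.
Qed.

Lemma dependent_choice {I : Type} {Y : I -> Type} (R : forall i, Y i -> Prop) :
  (forall i, exists y : Y i, R i y) -> exists g : forall i, Y i, forall i, R i (g i).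
Proof.
  intros H. exists (fun i => proj1_sig (constructive_indefinite_description _ (H i))).
  intro i; exact (proj2_sig (constructive_indefinite_description _ (H i))).
Qed.

Lemma dependent_choice2 {I X : Type} {Y : I -> X -> Type} (R : forall i x, Y i x -> Prop) :
  (forall i, exists x (y : Y i x), R i x y) ->
  exists (f : I -> X) (g : forall i, Y i (f i)), forall i, R i (f i) (g i).
Proof.
  intros H.
  destruct (dependent_choice (Y := fun i => {x : X & Y i x})
              (fun i p => R i (projT1 p) (projT2 p))) as [g Hg].
  - intro i. destruct (H i) as (x & y & Hxy). exists (existT _ x y). exact Hxy.
  - exists (fun i => projT1 (g i)), (fun i => projT2 (g i)). exact Hg.
Qed.

Lemma empty_fun_eq {X : Type} (f g : Empty_set -> X) : f = g.
Proof. apply functional_extensionality; intros []. Qed.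

Section Algebras.
Context {S : signature}.

Lemma hom_comp (A B C : algebra S) h k :
  is_hom A B h -> is_hom B C k -> is_hom A C (fun x => k (h x)).
Proof. intros Hh Hk o s; rewrite Hh, Hk; reflexivity. Qed.

Lemma hom_proj1_sig (A : algebra S) P HP : is_hom (subalgebra A P HP) A (@proj1_sig _ _).
Proof. intros o s; reflexivity. Qed.

Lemma hom_corestrict (A B : algebra S) P HP (h : A -> B) (Ph : forall a, P (h a)) :
  is_hom A B h -> is_hom A (subalgebra B P HP) (fun a => exist P (h a) (Ph a)).
Proof. intros Hh o s; apply proj1_sig_inj, Hh. Qed.

Lemma hom_product_proj (I : Type) (F : I -> algebra S) i :
  is_hom (product I F) (F i) (fun x => x i).
Proof. intros o s; reflexivity. Qed.

Definition image {A B : algebra S} (h : A -> B) : B -> Prop := fun b => exists a, h a = b.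

Lemma image_closed (A B : algebra S) h : is_hom A B h -> closed_subset B (image h).
Proof.
  intros Hh o s Hs. destruct (choice _ Hs) as [f Hf].
  exists (interp A o f). rewrite Hh. f_equal. apply functional_extensionality, Hf.
Qed.

Definition onto_image (A B : algebra S) h (Hh : is_hom A B h) :
  A -> subalgebra B (image h) (image_closed A B h Hh) :=
  fun a => exist (image h) (h a) (ex_intro _ a eq_refl).

Lemma onto_image_hom (A B : algebra S) h (Hh : is_hom A B h) :
  is_hom A (subalgebra B (image h) (image_closed A B h Hh)) (onto_image A B h Hh).
Proof. apply hom_corestrict, Hh. Qed.

Lemma onto_image_surjective (A B : algebra S) h (Hh : is_hom A B h) :
  Surjective (onto_image A B h Hh).
Proof. intros [b [a Ha]]. exists a. apply proj1_sig_inj, Ha. Qed.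

Lemma hom_inverse (A B : algebra S) h g :
  is_hom A B h -> (forall x, g (h x) = x) -> (forall y, h (g y) = y) -> is_hom B A g.
Proof.
  intros Hh gh hg o s.
  rewrite <- (gh (interp A o (fun i => g (s i)))), Hh.
  f_equal. f_equal. apply functional_extensionality; intro; symmetry; apply hg.
Qed.

Lemma isomorphic_refl (A : algebra S) : isomorphic A A.
Proof. exists (fun x => x), (fun x => x). repeat split; intros o s; reflexivity. Qed.

Lemma isomorphic_sym (A B : algebra S) : isomorphic A B -> isomorphic B A.
Proof.
  intros (h & g & Hh & gh & hg). exists g, h.
  split; [exact (hom_inverse A B h g Hh gh hg) | split; assumption].
Qed.

Lemma isomorphic_of_bijective_hom (A B : algebra S) h :
  is_hom A B h -> Injective h -> Surjective h -> isomorphic A B.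
Proof.
  intros Hh Hi Hs. destruct (choice _ Hs) as [g hg].
  exists h, g. split; [exact Hh | split; [|exact hg]].
  intro x. apply Hi, hg.
Qed.

Lemma variety_intro (K : algebra S -> Prop) :
  (forall A B h, K A -> is_hom A B h -> Surjective h -> K B) ->
  (forall A P HP, K A -> K (subalgebra A P HP)) ->
  (forall I F, (forall i, K (F i)) -> K (product I F)) ->
  variety K.
Proof.
  intros HH HS HP. split; [|split; [exact HH | split; [exact HS | exact HP]]].
  intros A B KA (h & g & Hh & _ & hg). apply (HH A B h KA Hh). intro y; exists (g y); apply hg.
Qed.

Section Variety.
Variable K : algebra S -> Prop.
Hypothesis HK : variety K.

Lemma variety_isomorphic A B : K A -> isomorphic A B -> K B.
Proof. apply HK. Qed.

Lemma variety_hom_image A B h : K A -> is_hom A B h -> Surjective h -> K B.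
Proof. apply HK. Qed.

Lemma variety_subalgebra A P HP : K A -> K (subalgebra A P HP).
Proof. apply HK. Qed.

Lemma variety_product I F : (forall i, K (F i)) -> K (product I F).
Proof. apply HK. Qed.

End Variety.

Lemma variety_same_class (K L : algebra S -> Prop) :
  same_class K L -> variety K -> variety L.
Proof.
  intros E HK. apply variety_intro.
  - intros A B h LA Hh Hs. apply E, (variety_hom_image K HK A B h); [apply E | |]; assumption.
  - intros A P HP LA. apply E, variety_subalgebra, E; assumption.
  - intros I F LF. apply E, variety_product; [assumption|]. intro i; apply E, LF.
Qed.

End Algebras.

Section Terms.
Context {sym : Type}.

Lemma term_op_hom (A B : talg sym) h t s :
  is_hom A B h -> term_op B t (fun n => h (s n)) = h (term_op A t s).
Proof.
  intros Hh. induction t as [i | f ts IH]; simpl; [reflexivity|].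
  rewrite Hh. f_equal. apply functional_extensionality, IH.
Qed.

Lemma term_op_product (I : Type) (F : I -> talg sym) t (w : nat -> product I F) :
  term_op (product I F) t w = fun i => term_op (F i) t (fun n => w n i).
Proof.
  apply functional_extensionality_dep; intro i.
  exact (eq_sym (term_op_hom _ _ _ t w (hom_product_proj I F i))).
Qed.

Lemma Mod_variety (Sigma : term sym -> term sym -> Prop) : variety (Mod Sigma).
Proof.
  apply variety_intro.
  - intros A B h HA Hh Hs t u Htu s.
    destruct (choice _ (fun n => Hs (s n))) as [r Hr].
    replace s with (fun n => h (r n)) by (apply functional_extensionality, Hr).
    rewrite !(term_op_hom A B h); [f_equal; apply HA|..]; assumption.
  - intros A P HP HA t u Htu s. apply proj1_sig_inj.
    rewrite <- !(term_op_hom _ _ _ _ _ (hom_proj1_sig A P HP)). apply HA, Htu.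
  - intros I F HF t u Htu s. rewrite !term_op_product.
    apply functional_extensionality_dep; intro i. apply HF, Htu.
Qed.

Definition generated (A : talg sym) (v : nat -> A) : A -> Prop :=
  fun a => exists t, term_op A t v = a.

Lemma generated_closed (A : talg sym) v : closed_subset A (generated A v).
Proof.
  intros o ys Hys. destruct (choice _ Hys) as [ts Hts].
  exists (App o ts). simpl. f_equal. apply functional_extensionality, Hts.
Qed.

Definition generated_subalgebra (A : talg sym) v : talg sym :=
  subalgebra A (generated A v) (generated_closed A v).

Lemma generated_subalgebra_hom (B A : talg sym) (w : nat -> B) (s : nat -> A) :
  (forall t u, term_op B t w = term_op B u w -> term_op A t s = term_op A u s) ->
  exists e : generated_subalgebra B w -> A,
    is_hom _ A e /\ forall n, exists y, e y = s n.
Proof.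
  intros Hw.
  pose (e (y : generated_subalgebra B w) :=
          term_op A (proj1_sig (constructive_indefinite_description _ (proj2_sig y))) s).
  assert (He : forall y t, term_op B t w = proj1_sig y -> e y = term_op A t s).
  { intros y t Ht. unfold e.
    destruct (constructive_indefinite_description _ (proj2_sig y)) as [t' Ht']; simpl.
    apply Hw. rewrite Ht, Ht'. reflexivity. }
  exists e. split.
  - intros o ys. destruct (choice _ (fun n => proj2_sig (ys n))) as [ts Hts].
    rewrite (He _ (App o ts)); simpl.
    + f_equal. apply functional_extensionality; intro n. symmetry. apply He, Hts.
    + f_equal. apply functional_extensionality, Hts.
  - intro n. exists (exist _ (w n) (ex_intro _ (Var n) eq_refl)). apply (He _ (Var n)), eq_refl.
Qed.

End Terms.

Section CountableCover.
Context {sym : Type}.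
Variable A : talg sym.
Variable B : (nat -> A) -> talg sym.
Variable e : forall s, B s -> A.
Hypothesis e_hom : forall s, is_hom (B s) A (e s).
Hypothesis e_covers : forall s n, exists y, e s y = s n.

Definition covers (c s : nat -> A) : Prop := forall n, exists m, s m = c n.

Let Pr := product (nat -> A) B.

(* [x] takes the value [a] at every [s] whose range contains the range of [c]. *)
Definition eventually_equal (x : Pr) (a : A) (c : nat -> A) : Prop :=
  forall s, covers c s -> e s (x s) = a.

Definition eventually_constant (x : Pr) : Prop := exists a c, eventually_equal x a c.

Let merge (cs : nat -> nat -> A) : nat -> A :=
  fun k => cs (fst (of_nat k)) (snd (of_nat k)).

Lemma covers_merge cs s i : covers (merge cs) s -> covers (cs i) s.
Proof.
  intros Hs n. destruct (Hs (to_nat (i, n))) as [m Hm]. exists m.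
  rewrite Hm. unfold merge. rewrite cancel_of_to. reflexivity.
Qed.

Lemma eventually_equal_interp o xs bs cs :
  (forall i, eventually_equal (xs i) (bs i) (cs i)) ->
  eventually_equal (interp Pr o xs) (interp A o bs) (merge cs).
Proof.
  intros Hxs s Hs. simpl. rewrite e_hom. f_equal.
  apply functional_extensionality; intro i. apply Hxs, (covers_merge cs s i Hs).
Qed.

Lemma eventually_equal_unique x a c a' c' :
  eventually_equal x a c -> eventually_equal x a' c' -> a = a'.
Proof.
  intros H H'.
  pose (cs (i : nat) := match i with 0 => c | _ => c' end).
  assert (Hs : covers (merge cs) (merge cs)) by (intro n; exists n; reflexivity).
  rewrite <- (H _ (covers_merge cs _ 0 Hs)). exact (H' _ (covers_merge cs _ 1 Hs)).
Qed.

Lemma eventually_constant_closed : closed_subset Pr eventually_constant.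
Proof.
  intros o xs Hxs.
  destruct (choice (fun i (p : A * (nat -> A)) => eventually_equal (xs i) (fst p) (snd p)))
    as [f Hf].
  { intro i. destruct (Hxs i) as (a & c & H). exists (a, c). exact H. }
  do 2 eexists. apply eventually_equal_interp, Hf.
Qed.

Let Sb := subalgebra Pr eventually_constant eventually_constant_closed.

Definition eventual_value (x : Sb) : A :=
  proj1_sig (constructive_indefinite_description _ (proj2_sig x)).

Lemma eventual_value_spec (x : Sb) :
  exists c, eventually_equal (proj1_sig x) (eventual_value x) c.
Proof. exact (proj2_sig (constructive_indefinite_description _ (proj2_sig x))). Qed.

Lemma eventual_value_hom : is_hom Sb A eventual_value.
Proof.
  intros o xs. destruct (choice _ (fun i => eventual_value_spec (xs i))) as [cs Hcs].
  destruct (eventual_value_spec (interp Sb o xs)) as [c Hc].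
  exact (eventually_equal_unique _ _ _ _ _ Hc
           (eventually_equal_interp o (fun i => proj1_sig (xs i)) _ cs Hcs)).
Qed.

Lemma eventual_value_surjective : Surjective eventual_value.
Proof.
  intro a.
  assert (Hy : forall s, exists y : B s, (exists n, s n = a) -> e s y = a).
  { intro s. destruct (classic (exists n, s n = a)) as [[n Hn] | Hn].
    - destruct (e_covers s n) as [y Hy]. exists y. intros _. congruence.
    - destruct (e_covers s 0) as [y _]. exists y. contradiction. }
  destruct (dependent_choice _ Hy) as [x Hx].
  assert (Hxa : eventually_equal x a (fun _ => a)).
  { intros s Hs. apply Hx. destruct (Hs 0) as [m Hm]. eauto. }
  pose (y := exist eventually_constant x (ex_intro _ a (ex_intro _ _ Hxa)) : Sb).
  exists y. destruct (eventual_value_spec y) as [c Hc].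
  exact (eventually_equal_unique _ _ _ _ _ Hc Hxa).
Qed.

Lemma variety_of_countable_cover_family (K : talg sym -> Prop) :
  variety K -> (forall s, K (B s)) -> K A.
Proof.
  intros HK KB.
  apply (variety_hom_image K HK Sb A eventual_value);
    [| exact eventual_value_hom | exact eventual_value_surjective].
  apply variety_subalgebra, variety_product; assumption.
Qed.

End CountableCover.

Lemma variety_of_countable_covers {sym : Type} (K : talg sym -> Prop) (A : talg sym) :
  variety K ->
  (forall s : nat -> A, exists (B : talg sym) (e : B -> A),
      K B /\ is_hom B A e /\ forall n, exists y, e y = s n) ->
  K A.
Proof.
  intros HK Hcov.
  destruct (dependent_choice2 (Y := fun _ (B : talg sym) => B -> A) _ Hcov) as (B & e & H).
  apply (variety_of_countable_cover_family A B e); try assumption; intro s; apply H.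
Qed.

Section Birkhoff.
Context {sym : Type}.
Variable K : talg sym -> Prop.

Lemma separating_family :
  exists (I : Type) (B : I -> talg sym) (v : forall i, nat -> B i),
    (forall i, K (B i)) /\
    forall t u, (forall i, term_op (B i) t (v i) = term_op (B i) u (v i)) -> Th K t u.
Proof.
  pose (I := {p : term sym * term sym | ~ Th K (fst p) (snd p)}).
  assert (Hc : forall i : I, exists (B : talg sym) (v : nat -> B),
      K B /\ term_op B (fst (proj1_sig i)) v <> term_op B (snd (proj1_sig i)) v).
  { intros [[t u] Hn]; simpl in *. apply NNPP. intro Hc. apply Hn.
    intros B KB v. apply NNPP. intro Hne. apply Hc. eauto. }
  destruct (dependent_choice2 (Y := fun _ (B : talg sym) => nat -> B) _ Hc) as (B & v & Hv).
  exists I, B, v. split; [intro i; apply Hv|].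
  intros t u Htu. apply NNPP. intro Hn. apply (proj2 (Hv (exist _ (t, u) Hn))), Htu.
Qed.

Lemma Mod_Th_subset (HK : variety K) A : Mod (Th K) A -> K A.
Proof.
  intros HA. destruct separating_family as (I & B & v & KB & Hsep).
  pose (w n := (fun i => v i n) : product I B).
  apply (variety_of_countable_covers K A HK). intro s.
  destruct (generated_subalgebra_hom _ A w s) as (e & He & Hcov).
  { intros t u Htu. apply HA, Hsep. intro i.
    rewrite !term_op_product in Htu. exact (equal_f_dep Htu i). }
  exists (generated_subalgebra _ w), e. repeat split; try assumption.
  unfold generated_subalgebra. apply variety_subalgebra, variety_product; assumption.
Qed.

End Birkhoff.

Section CloneAlgebras.
Context {sym : Type}.

Definition tau_reduct (C : calg sym) : talg sym :=
  @Algebra (tau_sig sym) C (fun f s => cq C (cf C f) s).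

Lemma tau_reduct_O_omega (A : talg sym) :
  tau_reduct (O_omega A) = product (nat -> A) (fun _ => A).
Proof. reflexivity. Qed.

Lemma hom_cq (C D : calg sym) h x ys :
  is_hom C D h -> h (cq C x ys) = cq D (h x) (fun i => h (ys i)).
Proof.
  intros Hh. unfold cq. rewrite Hh. f_equal.
  apply functional_extensionality; intros [|n]; reflexivity.
Qed.

Lemma hom_ce (C D : calg sym) h i : is_hom C D h -> h (ce C i) = ce D i.
Proof. intros Hh. unfold ce. rewrite Hh. f_equal. apply empty_fun_eq. Qed.

Lemma hom_cf (C D : calg sym) h f : is_hom C D h -> h (cf C f) = cf D f.
Proof. intros Hh. unfold cf. rewrite Hh. f_equal. apply empty_fun_eq. Qed.

Lemma hom_of_clone_ops (C D : calg sym) h :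
  (forall x ys, h (cq C x ys) = cq D (h x) (fun i => h (ys i))) ->
  (forall i, h (ce C i) = ce D i) -> (forall f, h (cf C f) = cf D f) -> is_hom C D h.
Proof.
  intros Hq He Hf [|i|f] s.
  - transitivity (h (cq C (s 0) (fun i => s (S i)))).
    { unfold cq. f_equal. f_equal. apply functional_extensionality; intros [|n]; reflexivity. }
    rewrite Hq. unfold cq. f_equal. apply functional_extensionality; intros [|n]; reflexivity.
  - transitivity (h (ce C i)); [unfold ce; f_equal; f_equal; apply empty_fun_eq|].
    rewrite He. unfold ce. f_equal. apply empty_fun_eq.
  - transitivity (h (cf C f)); [unfold cf; f_equal; f_equal; apply empty_fun_eq|].
    rewrite Hf. unfold cf. f_equal. apply empty_fun_eq.
Qed.

Lemma tau_reduct_hom (C D : calg sym) h : is_hom C D h -> is_hom (tau_reduct C) (tau_reduct D) h.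
Proof. intros Hh f s. simpl. rewrite (hom_cq _ _ _ _ _ Hh), (hom_cf _ _ _ _ Hh). reflexivity. Qed.

Lemma tau_reduct_closed (C : calg sym) P :
  closed_subset C P -> closed_subset (tau_reduct C) P.
Proof. intros HP f xs Hxs. apply HP. intros [|n]; [apply HP; intros [] | apply Hxs]. Qed.

Lemma tau_reduct_subalgebra_hom (C : calg sym) P HP :
  is_hom (subalgebra (tau_reduct C) P (tau_reduct_closed C P HP))
    (tau_reduct (subalgebra C P HP)) (fun x => x).
Proof.
  intros f xs. apply proj1_sig_inj.
  change (cq C (cf C f) (fun i => proj1_sig (xs i)) =
          proj1_sig (cq (subalgebra C P HP) (cf (subalgebra C P HP) f) xs)).
  rewrite (hom_cq _ _ _ _ _ (hom_proj1_sig C P HP)), (hom_cf _ _ _ _ (hom_proj1_sig C P HP)).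
  reflexivity.
Qed.

Lemma tau_reduct_product_hom (I : Type) (F : I -> calg sym) :
  is_hom (product I (fun i => tau_reduct (F i))) (tau_reduct (product I F)) (fun x => x).
Proof.
  intros f xs. apply functional_extensionality_dep; intro i.
  change (cq (F i) (cf (F i) f) (fun n => xs n i) =
          cq (product I F) (cf (product I F) f) xs i).
  rewrite (hom_cq _ _ _ _ _ (hom_product_proj I F i)), (hom_cf _ _ _ _ (hom_product_proj I F i)).
  reflexivity.
Qed.

Lemma O_omega_clone (A : talg sym) : is_clone_alg (O_omega A).
Proof. repeat split. Qed.

Lemma hom_image_clone (C D : calg sym) h :
  is_clone_alg C -> is_hom C D h -> Surjective h -> is_clone_alg D.
Proof.
  intros (N1 & N2 & N3) Hh Hs.
  assert (Hseq : forall ys : nat -> D, exists r, ys = fun n => h (r n)).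
  { intro ys. destruct (choice _ (fun n => Hs (ys n))) as [r Hr]. exists r.
    apply functional_extensionality; intro n; symmetry; apply Hr. }
  assert (Hce : ce D = fun i => h (ce C i))
    by (apply functional_extensionality; intro; symmetry; apply (hom_ce _ _ _ _ Hh)).
  split; [|split].
  - intros i xs. destruct (Hseq xs) as [r ->].
    rewrite <- (hom_ce _ _ _ _ Hh), <- (hom_cq _ _ _ _ _ Hh), N1. reflexivity.
  - intro x. destruct (Hs x) as [x' <-].
    rewrite Hce, <- (hom_cq _ _ _ _ _ Hh), N2. reflexivity.
  - intros x ys zs. destruct (Hs x) as [x' <-].
    destruct (Hseq ys) as [ys' ->]. destruct (Hseq zs) as [zs' ->].
    rewrite <- !(hom_cq _ _ _ _ _ Hh), N3, (hom_cq _ _ _ _ _ Hh).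
    f_equal. apply functional_extensionality; intro; apply (hom_cq _ _ _ _ _ Hh).
Qed.

Lemma subalgebra_clone (C : calg sym) P HP :
  is_clone_alg C -> is_clone_alg (subalgebra C P HP).
Proof.
  intros (N1 & N2 & N3). pose proof (hom_proj1_sig C P HP) as Hp.
  split; [|split].
  - intros i xs. apply proj1_sig_inj.
    rewrite (hom_cq _ _ _ _ _ Hp), (hom_ce _ _ _ _ Hp). apply N1.
  - intro x. apply proj1_sig_inj. rewrite (hom_cq _ _ _ _ _ Hp).
    replace (fun i => proj1_sig (ce (subalgebra C P HP) i)) with (ce C)
      by (apply functional_extensionality; intro; symmetry; apply (hom_ce _ _ _ _ Hp)).
    apply N2.
  - intros x ys zs. apply proj1_sig_inj. rewrite !(hom_cq _ _ _ _ _ Hp), N3.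
    f_equal. apply functional_extensionality; intro; symmetry; apply (hom_cq _ _ _ _ _ Hp).
Qed.

Lemma product_clone (I : Type) (C : I -> calg sym) :
  (forall i, is_clone_alg (C i)) -> is_clone_alg (product I C).
Proof.
  intros HC.
  assert (Hq : forall x ys, cq (product I C) x ys = fun i => cq (C i) (x i) (fun n => ys n i)).
  { intros x ys. apply functional_extensionality_dep; intro i.
    exact (hom_cq _ _ _ x ys (hom_product_proj I C i)). }
  assert (He : forall i n, ce (product I C) n i = ce (C i) n)
    by (intros i n; exact (hom_ce _ _ _ n (hom_product_proj I C i))).
  split; [|split].
  - intros n xs. rewrite Hq. apply functional_extensionality_dep; intro i.
    rewrite He. apply HC.
  - intros x. rewrite Hq. apply functional_extensionality_dep; intro i.
    replace (fun n => ce (product I C) n i) with (ce (C i))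
      by (apply functional_extensionality; intro; symmetry; apply He).
    apply HC.
  - intros x ys zs. rewrite !Hq. apply functional_extensionality_dep; intro i.
    rewrite (proj2 (proj2 (HC i))). f_equal.
    apply functional_extensionality; intro n. rewrite Hq. reflexivity.
Qed.

Definition clone_rep (D : calg sym) : D -> O_omega (tau_reduct D) := fun a s => cq D a s.

Lemma clone_rep_hom (D : calg sym) : is_clone_alg D -> is_hom D _ (clone_rep D).
Proof.
  intros (N1 & N2 & N3). apply hom_of_clone_ops; intros.
  - apply functional_extensionality; intro. apply N3.
  - apply functional_extensionality; intro. apply N1.
  - reflexivity.
Qed.

Lemma clone_rep_injective (D : calg sym) : is_clone_alg D -> Injective (clone_rep D).
Proof.
  intros (_ & N2 & _) x y E.
  rewrite <- (N2 x), <- (N2 y). exact (equal_f E (ce D)).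
Qed.

Lemma clone_functional_representation (D : calg sym) (HD : is_clone_alg D) :
  isomorphic D (subalgebra (O_omega (tau_reduct D)) (image (clone_rep D))
                  (image_closed _ _ _ (clone_rep_hom D HD))).
Proof.
  apply (isomorphic_of_bijective_hom _ _ _ (onto_image_hom _ _ _ (clone_rep_hom D HD))).
  - intros x y E. apply (clone_rep_injective D HD). exact (f_equal (@proj1_sig _ _) E).
  - apply onto_image_surjective.
Qed.

End CloneAlgebras.

Section Triangle.
Context {sym : Type}.
Variable K : talg sym -> Prop.
Hypothesis HK : variety K.

Lemma triangle_intro (D : calg sym) : is_clone_alg D -> K (tau_reduct D) -> triangle K D.
Proof.
  intros HD KD. split; [exact HD|].
  exists (tau_reduct D), (image (clone_rep D)), (image_closed _ _ _ (clone_rep_hom D HD)).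
  split; [exact KD | apply clone_functional_representation].
Qed.

Lemma O_omega_subalgebra_tau_reduct (A : talg sym) P HP :
  K A -> K (tau_reduct (subalgebra (O_omega A) P HP)).
Proof.
  intros KA.
  eapply (variety_hom_image K HK); [| exact (tau_reduct_subalgebra_hom _ P HP) |
                                      intro y; exists y; reflexivity].
  apply variety_subalgebra; [exact HK|].
  rewrite tau_reduct_O_omega. apply variety_product; [exact HK | intro; exact KA].
Qed.

Lemma triangle_tau_reduct (D : calg sym) : triangle K D -> K (tau_reduct D).
Proof.
  intros [_ (A & P & HP & KA & Hiso)].
  destruct (isomorphic_sym _ _ Hiso) as (g & h & Hg & hg & gh).
  apply (variety_hom_image K HK (tau_reduct (subalgebra (O_omega A) P HP)) (tau_reduct D) g
           (O_omega_subalgebra_tau_reduct A P HP KA)).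
  - apply tau_reduct_hom, Hg.
  - intro y. exists (h y). apply gh.
Qed.

Lemma triangle_clone_variety : clone_variety (triangle K).
Proof.
  split; [|intros C HC; exact (proj1 HC)].
  apply variety_intro.
  - intros C D h HC Hh Hs. apply triangle_intro.
    + exact (hom_image_clone C D h (proj1 HC) Hh Hs).
    + apply (variety_hom_image K HK (tau_reduct C) (tau_reduct D) h (triangle_tau_reduct C HC));
        [apply tau_reduct_hom|]; assumption.
  - intros C P HP HC. apply triangle_intro; [apply subalgebra_clone, HC|].
    eapply (variety_hom_image K HK); [| exact (tau_reduct_subalgebra_hom C P HP) |
                                        intro y; exists y; reflexivity].
    apply variety_subalgebra, triangle_tau_reduct; assumption.
  - intros I F HF. apply triangle_intro; [apply product_clone; intro i; apply HF|].
    eapply (variety_hom_image K HK); [| exact (tau_reduct_product_hom I F) |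
                                        intro y; exists y; reflexivity].
    apply variety_product; [exact HK|]. intro i. apply triangle_tau_reduct, HF.
Qed.

Lemma nabla_triangle_subset (B : talg sym) : nabla (triangle K) B -> K B.
Proof.
  intros (A & HBA & P & HP & TC).
  apply (variety_isomorphic K HK A B); [|apply isomorphic_sym, HBA].
  apply (variety_of_countable_covers K A HK). intro s.
  exists (tau_reduct (subalgebra (O_omega A) P HP)), (fun x => proj1_sig x s).
  split; [exact (triangle_tau_reduct _ TC)|]. split.
  - intros f xs. reflexivity.
  - intro n. exists (ce _ n). reflexivity.
Qed.

Lemma subset_nabla_triangle (B : talg sym) : K B -> nabla (triangle K) B.
Proof.
  intros KB. exists B. split; [apply isomorphic_refl|].
  assert (HT : closed_subset (O_omega B) (fun _ => True)) by (intros o s Hs; exact I).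
  exists (fun _ => True), HT. split; [apply subalgebra_clone, O_omega_clone|].
  exists B, (fun _ => True), HT. split; [exact KB | apply isomorphic_refl].
Qed.

End Triangle.

Section Nabla.
Context {sym : Type}.
Variable T : calg sym -> Prop.
Hypothesis HT : clone_variety T.

(* Equivalent to [nabla T B], but visibly stable under H, S and P. *)
Definition represented (B : talg sym) : Prop :=
  exists (D : calg sym) (Psi : D -> O_omega B), T D /\ is_hom D (O_omega B) Psi.

Lemma represented_nabla B : represented B -> nabla T B.
Proof.
  intros (D & Psi & TD & HPsi). exists B. split; [apply isomorphic_refl|].
  exists (image Psi), (image_closed _ _ _ HPsi).
  apply (variety_hom_image T (proj1 HT) D _ _ TD (onto_image_hom _ _ _ HPsi)).
  apply onto_image_surjective.
Qed.

Lemma O_omega_iso_hom (A B : talg sym) (h : B -> A) g :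
  is_hom B A h -> (forall x, g (h x) = x) -> (forall y, h (g y) = y) ->
  is_hom (O_omega A) (O_omega B) (fun u s => g (u (fun n => h (s n)))).
Proof.
  intros Hh gh hg [|i|f] s; apply functional_extensionality; intro z; simpl.
  - do 2 f_equal. apply functional_extensionality; intro n. symmetry. apply hg.
  - apply gh.
  - rewrite <- Hh. apply gh.
Qed.

Lemma nabla_represented B : nabla T B -> represented B.
Proof.
  intros (A & (h & g & Hh & gh & hg) & P & HP & TC).
  exists (subalgebra (O_omega A) P HP), (fun x s => g (proj1_sig x (fun n => h (s n)))).
  split; [exact TC|].
  exact (hom_comp _ _ _ _ _ (hom_proj1_sig (O_omega A) P HP) (O_omega_iso_hom A B h g Hh gh hg)).
Qed.

(* Only the elements of [D] that respect the kernel of [h] descend to [B']. *)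
Lemma represented_hom_image (B B' : talg sym) h :
  represented B -> is_hom B B' h -> Surjective h -> represented B'.
Proof.
  intros (D & Psi & TD & HPsi) Hh Hs. destruct (choice _ Hs) as [r hr].
  pose (Pd (d : D) := forall s s' : nat -> B, (forall n, h (s n) = h (s' n)) ->
                       h (Psi d s) = h (Psi d s')).
  assert (HPd : closed_subset D Pd).
  { intros o xs Hxs s s' E. rewrite !HPsi. destruct o as [|i|f]; simpl.
    - apply (Hxs 0). intro n. apply (Hxs (S n)), E.
    - apply E.
    - rewrite !Hh. f_equal. apply functional_extensionality, E. }
  exists (subalgebra D Pd HPd), (fun x z => h (Psi (proj1_sig x) (fun n => r (z n)))).
  split; [apply (variety_subalgebra T (proj1 HT)), TD|].
  intros o xs. apply functional_extensionality; intro z.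
  change (h (Psi (interp D o (fun i => proj1_sig (xs i))) (fun n => r (z n))) =
          O_interp B' o (fun i z => h (Psi (proj1_sig (xs i)) (fun n => r (z n)))) z).
  rewrite HPsi. destruct o as [|i|f]; simpl.
  - apply (proj2_sig (xs 0)). intro n. rewrite hr. reflexivity.
  - apply hr.
  - rewrite Hh. f_equal. apply functional_extensionality; intro n. apply hr.
Qed.

(* Only the elements of [D] that preserve [P] restrict to the subalgebra. *)
Lemma represented_subalgebra (B : talg sym) P HP :
  represented B -> represented (subalgebra B P HP).
Proof.
  intros (D & Psi & TD & HPsi).
  pose (Pd (d : D) := forall s : nat -> B, (forall n, P (s n)) -> P (Psi d s)).
  assert (HPd : closed_subset D Pd).
  { intros o xs Hxs s Hs. rewrite HPsi. destruct o as [|i|f]; simpl.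
    - apply (Hxs 0). intro n. apply (Hxs (S n)), Hs.
    - apply Hs.
    - apply HP, Hs. }
  exists (subalgebra D Pd HPd).
  exists (fun (x : subalgebra D Pd HPd) (z : nat -> subalgebra B P HP) =>
            exist P (Psi (proj1_sig x) (fun n => proj1_sig (z n)))
                      (proj2_sig x _ (fun n => proj2_sig (z n)))).
  split; [apply (variety_subalgebra T (proj1 HT)), TD|].
  intros o xs. apply functional_extensionality; intro z. apply proj1_sig_inj.
  change (Psi (interp D o (fun i => proj1_sig (xs i))) (fun n => proj1_sig (z n)) =
          proj1_sig (O_interp (subalgebra B P HP) o
            (fun i z => exist P (Psi (proj1_sig (xs i)) (fun n => proj1_sig (z n)))
                          (proj2_sig (xs i) _ (fun n => proj2_sig (z n)))) z)).
  rewrite HPsi. destruct o; reflexivity.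
Qed.

Lemma represented_product (I : Type) (F : I -> talg sym) :
  (forall i, represented (F i)) -> represented (product I F).
Proof.
  intros HF.
  destruct (dependent_choice2 (Y := fun i (D : calg sym) => D -> O_omega (F i)) _ HF)
    as (D & Psi & HD).
  exists (product I D), (fun d z i => Psi i (d i) (fun n => z n i)).
  split; [apply (variety_product T (proj1 HT)); intro i; apply HD|].
  intros o ds. apply functional_extensionality; intro z.
  apply functional_extensionality_dep; intro i.
  change (Psi i (interp (D i) o (fun a => ds a i)) (fun n => z n i) =
          O_interp (product I F) o (fun a z i => Psi i (ds a i) (fun n => z n i)) z i).
  rewrite (proj2 (HD i)). destruct o; reflexivity.
Qed.

Lemma nabla_variety : variety (nabla T).
Proof.
  apply variety_intro.
  - intros A B h HA Hh Hs. apply represented_nabla.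
    exact (represented_hom_image A B h (nabla_represented A HA) Hh Hs).
  - intros A P HP HA. apply represented_nabla, represented_subalgebra, nabla_represented, HA.
  - intros I F HF. apply represented_nabla, represented_product.
    intro i. apply nabla_represented, HF.
Qed.

End Nabla.

Theorem theorem6p7 (sym : Type) (K : talg sym -> Prop) :
  (variety K <-> same_class K (Mod (Th K))) /\
  (variety K <-> (same_class K (nabla (triangle K)) /\ clone_variety (triangle K))).
Proof.
  split; split.
  - intros HK A. split; [intros KA t u Htu; exact (Htu A KA) | apply Mod_Th_subset, HK].
  - intros E. apply (variety_same_class (Mod (Th K))); [intro A; symmetry; apply E|].
    apply Mod_variety.
  - intros HK. split; [|exact (triangle_clone_variety K HK)].
    intro B. split; [apply subset_nabla_triangle | apply nabla_triangle_subset, HK].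
  - intros [E HT]. apply (variety_same_class (nabla (triangle K))); [intro A; symmetry; apply E|].
    apply nabla_variety, HT.
Qed.
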